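(* Let $m\ge 2$ and let $B$ be a blocker in $CK(2m)$. Then the boundary edges belonging to $B$ are all contained in some set of $m$ consecutive boundary edges $\{[s,s+1],[s+1,s+2],\dots,[s+m-1,s+m]\}$ (labels modulo $2m$).
   Context: $CK(2m)$ denotes the complete convex geometric graph whose vertices are the $2m$ vertices of a convex polygon, labelled cyclically $0,1,\dots,2m-1$ (labels modulo $2m$), and whose edges are all straight segments between pairs of vertices. Two edges with four distinct endpoints cross iff their endpoints alternate in the cyclic order. A simple perfect matching (SPM) is a set of $m$ edges that are pairwise disjoint (no common endpoint and no crossing). A blocking set is a set of edges containing at least one edge of every SPM. A blocker is a blocking set with exactly $m$ edges. Boundary edges are the edges $[i,i+1]$. *)

From mathcomp Require Import all_boot.
Set Implicit Arguments. Unset Strict Implicit. Unset Printing Implicit Defensive.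

(* Vertices of CK(n): 'I_n, labelled 0..n-1 cyclically (n = 2m).
   An edge is a 2-element subset of the vertex set. *)
Definition is_edge (n : nat) (e : {set 'I_n}) : bool := #|e| == 2.

(* Two edges cross iff they have four distinct endpoints that alternate in
   the cyclic order; with labels a < b, c < d this means a < c < b < d
   or c < a < d < b. *)
Definition cross (n : nat) (e f : {set 'I_n}) : bool :=
  [exists a : 'I_n, exists b : 'I_n, exists c : 'I_n, exists d : 'I_n,
    [&& e == [set a; b], f == [set c; d] &
        (((a < c) && (c < b) && (b < d)) || ((c < a) && (a < d) && (d < b)))%N]].

Definition edges_disjoint (n : nat) (e f : {set 'I_n}) : bool :=
  [disjoint e & f] && ~~ cross e f.

Definition is_SPM (m : nat) (M : {set {set 'I_(2 * m)}}) : bool :=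
  [&& [forall e in M, is_edge e], #|M| == m &
      [forall e in M, forall f in M, (e != f) ==> edges_disjoint e f]].

Definition is_blocking (m : nat) (B : {set {set 'I_(2 * m)}}) : Prop :=
  (forall e, e \in B -> is_edge e) /\
  (forall M, is_SPM M -> exists2 e, e \in B & e \in M).

Definition is_blocker (m : nat) (B : {set {set 'I_(2 * m)}}) : Prop :=
  is_blocking B /\ #|B| = m.

Definition bnd_edge (n : nat) (i : 'I_n) : {set 'I_n} :=
  [set x : 'I_n | (val x == val i) || (val x == (val i).+1 %% n)].

From mathcomp Require Import all_boot zify.
Set Implicit Arguments. Unset Strict Implicit. Unset Printing Implicit Defensive.

(* Give the chord {x, y} the class x + y mod 2m.  The chords of an odd class
   form a simple perfect matching of parallel chords, so a blocker, having m
   edges and meeting all m of these matchings, has its edges in pairwise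
   distinct classes.  The boundary edges [x, x+1] and [x+m, x+m+1] share the
   class 2x+1, so they are not both in B.  If three boundary edges of B had
   cyclic gaps d1, d2, d3 all shorter than m, the noncrossing matching made of
   three blocks of nested chords, of half-lengths m-d2, m-d3, m-d1 and centred
   at the antipodes of the three edges, would avoid B: each block has the class
   of one of the three edges, which lies outside it.  A set of positions on the
   2m-cycle with neither antipodal pairs nor such triangles lies within m
   consecutive positions. *)

Lemma modn_lt_double d x : x < 2 * d ->
  (x < d /\ x %% d = x) \/ (d <= x /\ x %% d = x - d).
Proof.
move=> x_lt; case: (ltnP x d) => [x_lt_d | d_le_x]; first by left; rewrite modn_small.
right; split=> //; rewrite -{1}(subnK d_le_x) modnDr modn_small //; lia.
Qed.

Lemma set2_eq (T : finType) (a b c d : T) :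
  [set a; b] = [set c; d] -> (a = c /\ b = d) \/ (a = d /\ b = c).
Proof.
move=> E.
have : a \in [set c; d] by rewrite -E set21.
have : b \in [set c; d] by rewrite -E set22.
have : c \in [set a; b] by rewrite E set21.
have : d \in [set a; b] by rewrite E set22.
by rewrite !in_set2; do 4 (case/orP => /eqP ?); subst; auto.
Qed.

Section CK.
Variable m : nat.
Hypothesis m_gt0 : 0 < m.
Local Notation n := (2 * m).

Lemma n_gt0 : 0 < n.
Proof. by rewrite muln_gt0. Qed.

Definition vtx (k : nat) : 'I_n := Ordinal (ltn_pmod k n_gt0).

Lemma vtx_eq x y : (vtx x == vtx y) = (x == y %[mod n]).
Proof. by []. Qed.

Lemma vtx_val (i : 'I_n) : vtx i = i.
Proof. by apply: val_inj; rewrite /= modn_small. Qed.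

Lemma vtxDn x : vtx (x + n) = vtx x.
Proof. by apply/eqP; rewrite vtx_eq modnDr. Qed.

Lemma vtx_offset_mod a p u : u < n -> vtx (a + p) = vtx (a + u) -> p %% n = u.
Proof. by move=> u_lt /eqP; rewrite vtx_eq eqn_modDl (modn_small u_lt) => /eqP. Qed.

Lemma vtx_offset_inj a u v : u < n -> v < n -> vtx (a + u) = vtx (a + v) -> u = v.
Proof. by move=> u_lt v_lt /(vtx_offset_mod v_lt); rewrite modn_small. Qed.

Lemma vtx_offset a (i : 'I_n) : exists2 p, p < n & i = vtx (a + p).
Proof.
exists ((i + (n - a %% n)) %% n); first exact: ltn_pmod n_gt0.
have a_lt : a %% n < n := ltn_pmod a n_gt0.
have i_lt : i < n := ltn_ord i.
apply/esym/eqP; rewrite -{2}(vtx_val i) vtx_eq modnDmr -modnDml.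
have -> : a %% n + (i + (n - a %% n)) = i + n by lia.
by rewrite modnDr.
Qed.

Lemma vtx_shift_neq x k : 0 < k < n -> vtx x != vtx (x + k).
Proof. by move=> k_in; rewrite vtx_eq -{1}[x]addn0 eqn_modDl mod0n modn_small; lia. Qed.

(* Two chords are parallel iff their endpoint sums agree modulo [n]. *)
Definition class (e : {set 'I_n}) : 'I_n := vtx (\sum_(x in e) val x).

Lemma class_pair x y : vtx x != vtx y -> class [set vtx x; vtx y] = vtx (x + y).
Proof.
move=> xy; rewrite /class big_setU1 ?inE // big_set1.
by apply/eqP; rewrite vtx_eq /= modnDm.
Qed.

Definition bnd (x : nat) : {set 'I_n} := [set vtx x; vtx x.+1].

Lemma bnd_edge_vtx x : bnd_edge (vtx x) = bnd x.
Proof.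
apply/setP => y; rewrite !inE -!val_eqE /=.
by rewrite -[(x %% n).+1]addn1 modnDml addn1.
Qed.

Lemma bndDn x : bnd (x + n) = bnd x.
Proof. by rewrite /bnd vtxDn -addSn vtxDn. Qed.

Lemma class_bnd x : class (bnd x) = vtx (x + x.+1).
Proof.
by rewrite /bnd -(addn1 x); apply/class_pair/vtx_shift_neq; lia.
Qed.

(* Rotation preserves cyclic order; for four distinct values, being in cyclic
   order means that exactly one of the four cyclic comparisons descends. *)
Lemma rotate_cyclic_order o x1 y1 x2 y2 :
  x1 < n -> y1 < n -> x2 < n -> y2 < n ->
  (o + x1) %% n < (o + y1) %% n -> (o + y1) %% n < (o + x2) %% n ->
  (o + x2) %% n < (o + y2) %% n ->
  (x1 < y1) + (y1 < x2) + (x2 < y2) + (y2 < x1) = 3.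
Proof.
have o_lt : o %% n < n := ltn_pmod o n_gt0.
rewrite -!(modnDml o) => x1_lt y1_lt x2_lt y2_lt.
have k1 : o %% n + x1 < 2 * n by lia.
have k2 : o %% n + y1 < 2 * n by lia.
have k3 : o %% n + x2 < 2 * n by lia.
have k4 : o %% n + y2 < 2 * n by lia.
case: (modn_lt_double k1) => [[? ->]|[? ->]];
case: (modn_lt_double k2) => [[? ->]|[? ->]];
case: (modn_lt_double k3) => [[? ->]|[? ->]];
case: (modn_lt_double k4) => [[? ->]|[? ->]]; lia.
Qed.

Definition noncrossing_involution (pi : nat -> nat) : Prop :=
  forall u, u < n -> [/\ pi u < n, pi u != u, pi (pi u) = u &
    forall v, v < n -> u < v < pi u -> pi v < pi u].

Section RotatedInvolution.
Variables (o : nat) (pi : nat -> nat).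
Hypothesis pi_nc : noncrossing_involution pi.

Let pi_lt u : u < n -> pi u < n.
Proof. by case/pi_nc. Qed.

Definition chord u : {set 'I_n} := [set vtx (o + u); vtx (o + pi u)].
Definition chords : {set {set 'I_n}} := [set chord u | u : 'I_n].

Lemma chord_pi u : u < n -> chord (pi u) = chord u.
Proof. by case/pi_nc => _ _ pi_invol _; rewrite /chord pi_invol setUC. Qed.

Lemma chord_neq u : u < n -> vtx (o + u) != vtx (o + pi u).
Proof.
move=> u_lt; case/pi_nc: (u_lt) => pi_u_lt pi_u_neq _ _.
by apply/negP => /eqP /(vtx_offset_inj u_lt pi_u_lt) E; rewrite -E eqxx in pi_u_neq.
Qed.

Lemma class_chord u : u < n -> class (chord u) = vtx (o + u + (o + pi u)).
Proof. by move=> u_lt; rewrite class_pair ?chord_neq. Qed.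

Lemma chords_disjoint u v : u < n -> v < n -> chord u != chord v ->
  [disjoint chord u & chord v].
Proof.
move=> u_lt v_lt; apply: contraR => /pred0Pn [x /andP [/set2P xu /set2P xv]].
have [pu_lt pv_lt] := (pi_lt u_lt, pi_lt v_lt).
apply/eqP; case: xu xv => -> [] /esym E.
- by rewrite (vtx_offset_inj v_lt u_lt E).
- by rewrite -(vtx_offset_inj pv_lt u_lt E) chord_pi.
- by rewrite (vtx_offset_inj v_lt pu_lt E) chord_pi.
- by rewrite -(chord_pi u_lt) -(chord_pi v_lt) (vtx_offset_inj pv_lt pu_lt E).
Qed.

Lemma chord_endpoints u a b : u < n -> chord u = [set a; b] ->
  exists2 x, x < n & a = vtx (o + x) /\ b = vtx (o + pi x).
Proof.
move=> u_lt; case/pi_nc: (u_lt) => pi_u_lt _ pi_invol _.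
by case/set2_eq => [[<- <-]|[<- <-]]; [exists u | exists (pi u); rewrite ?pi_invol].
Qed.

Lemma noncrossing_not_cyclic x y : x < n -> y < n ->
  (x < y) + (y < pi x) + (pi x < pi y) + (pi y < x) = 3 -> False.
Proof.
move=> x_lt y_lt; have [pi_x_lt _ pi_x_invol nc_x] := pi_nc x_lt.
have [pi_y_lt _ pi_y_invol nc_y] := pi_nc y_lt.
have [_ _ _ nc_pi_x] := pi_nc pi_x_lt; have [_ _ _ nc_pi_y] := pi_nc pi_y_lt.
move: (nc_x y y_lt) (nc_y _ pi_x_lt) (nc_pi_x _ pi_y_lt) (nc_pi_y x x_lt).
rewrite pi_x_invol pi_y_invol; lia.
Qed.

Lemma chords_nocross u v : u < n -> v < n -> ~~ cross (chord u) (chord v).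
Proof.
move=> u_lt v_lt; apply/negP => /existsP [a /existsP [b /existsP [c /existsP [d]]]].
case/and3P => /eqP /(chord_endpoints u_lt) [x x_lt [-> ->]].
move=> /eqP /(chord_endpoints v_lt) [y y_lt [-> ->]] /=.
have [[pi_x_lt _ _ _] [pi_y_lt _ _ _]] := (pi_nc x_lt, pi_nc y_lt).
case/orP => /andP [/andP [h1 h2] h3].
  exact: (noncrossing_not_cyclic x_lt y_lt
            (rotate_cyclic_order x_lt y_lt pi_x_lt pi_y_lt h1 h2 h3)).
exact: (noncrossing_not_cyclic y_lt x_lt
          (rotate_cyclic_order y_lt x_lt pi_y_lt pi_x_lt h1 h2 h3)).
Qed.

Lemma chordsP e : e \in chords -> exists2 u, u < n & e = chord u.
Proof. by case/imsetP => u _ ->; exists (val u) => //; apply: ltn_ord. Qed.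

Lemma chords_SPM : is_SPM chords.
Proof.
have chords_triv : trivIset chords.
  apply/trivIsetP => _ _ /chordsP [u u_lt ->] /chordsP [v v_lt ->].
  exact: chords_disjoint.
have chords_cover : cover chords = setT.
  apply/setP => x; rewrite inE; apply/bigcupP.
  have [u u_lt ->] := vtx_offset o x.
  by exists (chord u); [apply/imsetP; exists (Ordinal u_lt) | rewrite set21].
have chord_card e : e \in chords -> #|e| = 2.
  by case/chordsP => u u_lt ->; rewrite cards2 chord_neq.
apply/and3P; split.
- by apply/forallP => e; apply/implyP => /chord_card; rewrite /is_edge => ->.
- move/eqP: chords_triv; rewrite chords_cover cardsT card_ord (eq_bigr _ chord_card).
  rewrite sum_nat_const => E; apply/eqP; lia.
apply/forallP => e; apply/implyP => /chordsP [u u_lt ->].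
apply/forallP => f; apply/implyP => /chordsP [v v_lt ->].
apply/implyP => uv; rewrite /edges_disjoint chords_disjoint //.
exact: chords_nocross.
Qed.

End RotatedInvolution.

(* Reflection inside three consecutive blocks of lengths [2 ka], [2 kb] and
   [2 (m - ka - kb)]; with [ka = m] it is the single reflection [u |-> n - 1 - u]. *)
Definition nested_blocks ka kb u :=
  if u < 2 * ka then 2 * ka - 1 - u
  else if u < 2 * (ka + kb) then 2 * (2 * ka + kb) - 1 - u
  else 2 * (m + ka + kb) - 1 - u.

Lemma nested_blocks_block ka kb u : ka + kb <= m -> u < n ->
  exists l k, [/\ l <= u < l + 2 * k, l + 2 * k <= n &
    forall v, l <= v < l + 2 * k -> nested_blocks ka kb v = 2 * (l + k) - 1 - v].
Proof.
rewrite /nested_blocks => k_le u_lt.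
case: (ltnP u (2 * ka)) => [u_in | ?].
  by exists 0, ka; split=> [||v v_in]; rewrite ?ifT; lia.
case: (ltnP u (2 * (ka + kb))) => [u_in | u_in].
  by exists (2 * ka), kb; split=> [||v v_in]; [lia | lia | rewrite ifF ?ifT; lia].
by exists (2 * (ka + kb)), (m - ka - kb); split=> [||v v_in]; rewrite ?ifF; lia.
Qed.

Lemma nested_blocks_noncrossing ka kb :
  ka + kb <= m -> noncrossing_involution (nested_blocks ka kb).
Proof.
move=> k_le u u_lt; have [l [k [u_in block_le reflect]]] := nested_blocks_block k_le u_lt.
have pi_u_in : l <= nested_blocks ka kb u < l + 2 * k by rewrite reflect //; lia.
split=> [||| v v_lt]; rewrite ?(reflect _ pi_u_in) reflect //; try lia.
move=> v_in; have v_in' : l <= v < l + 2 * k by lia.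
by rewrite reflect //; lia.
Qed.

Section Blocker.
Hypothesis m_gt1 : 1 < m.
Variable B : {set {set 'I_n}}.
Hypothesis B_blocker : is_blocker B.

Lemma blocker_meets_chords o pi : noncrossing_involution pi ->
  exists2 u, u < n & chord o pi u \in B.
Proof.
move=> pi_nc; have [[_ B_meets] _] := B_blocker.
have [e eB /chordsP [u u_lt e_def]] := B_meets _ (chords_SPM o pi_nc).
by exists u => //; rewrite -e_def.
Qed.

Lemma blocker_class_inj : {in B &, injective class}.
Proof.
have [_ card_B] := B_blocker.
pose odd_classes := [set vtx (2 * i + 1) | i : 'I_m].
have odd_sub : odd_classes \subset class @: B.
  apply/subsetP => _ /imsetP [i _ ->].
  have nc : noncrossing_involution (nested_blocks m 0).
    by apply: nested_blocks_noncrossing; rewrite addn0.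
  have [u u_lt uB] := blocker_meets_chords i.+1 nc.
  apply/imsetP; exists (chord i.+1 (nested_blocks m 0) u) => //.
  rewrite class_chord //; apply/eqP; rewrite vtx_eq /nested_blocks.
  rewrite ifT; last by lia.
  have -> : i.+1 + u + (i.+1 + (2 * m - 1 - u)) = 2 * i + 1 + n by lia.
  by rewrite modnDr.
have card_odd : #|odd_classes| = m.
  rewrite card_imset ?card_ord // => i j.
  have [i_lt j_lt] := (ltn_ord i, ltn_ord j).
  move/eqP; rewrite vtx_eq !modn_small; try lia.
  by move/eqP => ij; apply: ord_inj; lia.
apply/imset_injP; rewrite eqn_leq leq_imset_card card_B -{1}card_odd.
exact: subset_leq_card.
Qed.

Lemma blocker_no_antipodal_bnd x : bnd x \in B -> bnd (x + m) \in B -> False.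
Proof.
move=> xB xmB.
have same_class : class (bnd x) = class (bnd (x + m)).
  rewrite !class_bnd; apply/eqP; rewrite vtx_eq.
  have -> : x + m + (x + m).+1 = x + x.+1 + n by lia.
  by rewrite modnDr.
have : vtx x \in bnd (x + m) by rewrite -(blocker_class_inj xB xmB same_class) set21.
rewrite /bnd -(addn1 (x + m)) -addnA.
by case/set2P => /eqP; apply/negP/vtx_shift_neq; lia.
Qed.

(* A chord nested in the block of offsets [l, l + 2 k) has the class of the
   boundary edge antipodal to the middle of the block, which lies outside it. *)
Lemma blocker_avoids_block o l k u v :
  k < m -> l + 2 * k <= n -> l <= u < l + 2 * k -> l <= v < l + 2 * k ->
  u + v = 2 * (l + k) - 1 ->
  bnd (o + (l + k - 1 + m)) \in B -> [set vtx (o + u); vtx (o + v)] \in B -> False.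
Proof.
move=> k_lt block_le u_in v_in uv_sum bB eB.
have u_lt : u < n by lia.
have v_lt : v < n by lia.
have uv_neq : vtx (o + u) != vtx (o + v).
  by apply/negP => /eqP /(vtx_offset_inj u_lt v_lt); lia.
have same_class : class (bnd (o + (l + k - 1 + m))) = class [set vtx (o + u); vtx (o + v)].
  rewrite class_bnd class_pair //; apply/eqP; rewrite vtx_eq.
  have -> : o + (l + k - 1 + m) + (o + (l + k - 1 + m)).+1 = o + u + (o + v) + n by lia.
  by rewrite modnDr.
have : vtx (o + (l + k - 1 + m)) \in [set vtx (o + u); vtx (o + v)].
  by rewrite -(blocker_class_inj bB eB same_class) set21.
have antipode_lt : l + k - 1 + m < 2 * n by lia.
case/set2P => [/(vtx_offset_mod u_lt) | /(vtx_offset_mod v_lt)];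
  by case: (modn_lt_double antipode_lt) => [[? ->]|[? ->]]; lia.
Qed.

Lemma blocker_no_central_triangle x d1 d2 :
  0 < d1 < m -> 0 < d2 < m -> m < d1 + d2 ->
  bnd x \in B -> bnd (x + d1) \in B -> bnd (x + d1 + d2) \in B -> False.
Proof.
move=> d1_in d2_in d12_gt xB yB zB.
pose ka := m - d2; pose kb := d1 + d2 - m; pose kc := m - d1.
pose o := x + m + 1 - ka.
have nc : noncrossing_involution (nested_blocks ka kb) by apply: nested_blocks_noncrossing; lia.
have [u u_lt uB] := blocker_meets_chords o nc.
case: (ltnP u (2 * ka)) => [u_in | ?]; last case: (ltnP u (2 * (ka + kb))) => [u_in | u_in].
- have pi_u : nested_blocks ka kb u = 2 * ka - 1 - u by rewrite /nested_blocks ifT.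
  apply: (blocker_avoids_block (l := 0) (k := ka) _ _ _ _ _ _ uB); rewrite ?pi_u; try lia.
  have -> : o + (0 + ka - 1 + m) = x + n by lia.
  by rewrite bndDn.
- have pi_u : nested_blocks ka kb u = 2 * (2 * ka + kb) - 1 - u.
    by rewrite /nested_blocks ifF ?ifT //; lia.
  apply: (blocker_avoids_block (l := 2 * ka) (k := kb) _ _ _ _ _ _ uB); rewrite ?pi_u; try lia.
  have -> : o + (2 * ka + kb - 1 + m) = x + d1 + n by lia.
  by rewrite bndDn.
- have pi_u : nested_blocks ka kb u = 2 * (m + ka + kb) - 1 - u.
    by rewrite /nested_blocks !ifF //; lia.
  apply: (blocker_avoids_block (l := 2 * (ka + kb)) (k := kc) _ _ _ _ _ _ uB); rewrite ?pi_u; try lia.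
  have -> : o + (2 * (ka + kb) + kc - 1 + m) = x + d1 + d2 + n by lia.
  by rewrite bndDn.
Qed.

End Blocker.

(* Measured from a point [a] of [S], let [q] be the first position of [S]
   strictly beyond the antipode of [a] ([n] if there is none); the [m]
   positions starting at [q] contain [S]. *)
Lemma semicircle_cover (S : pred 'I_n) :
  (forall x, S (vtx x) -> S (vtx (x + m)) -> False) ->
  (forall x d1 d2, 0 < d1 < m -> 0 < d2 < m -> m < d1 + d2 ->
     S (vtx x) -> S (vtx (x + d1)) -> S (vtx (x + d1 + d2)) -> False) ->
  exists s : 'I_n, forall i, S i -> exists2 k, k < m & val i = (val s + k) %% n.
Proof.
move=> no_antipodal no_triangle.
have [a Sa | S0] := pickP S; last by exists (vtx 0) => i; rewrite S0.
rewrite -[a]vtx_val in Sa.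
have q_ex : exists q, (m < q) && ((q == n) || S (vtx (a + q))).
  by exists n; rewrite eqxx andbT; lia.
case: (ex_minnP q_ex) => q /andP [q_gt q_end] q_min.
have q_le_n : q <= n by apply: q_min; rewrite eqxx andbT; lia.
exists (vtx (a + q)) => i; have [p p_lt ->] := vtx_offset a i => Sp /=.
case: (ltngtP p m) => [p_lt_m | p_gt_m | p_eq_m].
- case: (ltnP (p + m) q) => [pm_lt_q | q_le_pm].
    exists (p + n - q); first lia.
    rewrite modnDml; have -> : a + q + (p + n - q) = a + p + n by lia.
    by rewrite modnDr.
  have Sq : S (vtx (a + q)) by case/orP: q_end => [/eqP q_n | //]; lia.
  exfalso; case: (ltngtP (p + m) q) => [|q_lt_pm | q_eq_pm]; first lia.
    apply: (no_triangle a p (q - p)) => //; try lia.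
    by have -> : a + p + (q - p) = a + q by lia.
  by apply: (no_antipodal (a + p)); rewrite // -addnA q_eq_pm.
- have q_le_p : q <= p by apply: q_min; rewrite p_gt_m Sp orbT.
  exists (p - q); first lia.
  by rewrite modnDml; have -> : a + q + (p - q) = a + p by lia.
- by rewrite p_eq_m in Sp; case: (no_antipodal _ Sa Sp).
Qed.

End CK.

Theorem lemma3p3 (m : nat) (B : {set {set 'I_(2 * m)}}) :
  (2 <= m)%N -> is_blocker B ->
  exists s : 'I_(2 * m),
    forall i : 'I_(2 * m), bnd_edge i \in B ->
      exists2 k : nat, (k < m)%N & val i = (val s + k) %% (2 * m).
Proof.
move=> m_gt1 B_blocker; have m_gt0 : 0 < m := ltnW m_gt1.
apply: (semicircle_cover (m_gt0 := m_gt0) (S := fun i => bnd_edge i \in B)) => /= [x | x d1 d2].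
  rewrite !bnd_edge_vtx; exact: blocker_no_antipodal_bnd.
rewrite !bnd_edge_vtx; exact: blocker_no_central_triangle.
Qed.
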